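(* Let $\Gamma$ be a group and $S$ a $\Gamma$-graded semigroup with local units. The following are equivalent: (1) $S$ is strongly graded; (2) $S_\alpha S_{\alpha^{-1}}=S_\varepsilon$ for every $\alpha\in\Gamma$; (3) $S_\alpha S_{\alpha^{-1}}$ contains all the local units of $S$ for every $\alpha\in\Gamma$. Moreover, if $S$ is an inverse semigroup, these are also equivalent to each of: (4) $E(S)=\{ss^{-1}:s\in S_\alpha\}$ for every $\alpha$; (5) $E(S)=\{s^{-1}s:s\in S_\alpha\}$ for every $\alpha$; (6) for all $u\in E(S)$ and $\alpha\in\Gamma$ there is $s\in S_\alpha$ with $u\,\mathscr L\,s$; (7) for all $u\in E(S)$ and $\alpha\in\Gamma$ there is $s\in S_\alpha$ with $u\,\mathscr R\,s$.
   Context: Semigroups have a zero; $S$ is $\Gamma$-graded via $\deg:S\setminus\{0\}\to\Gamma$ with $\deg(st)=\deg(s)\deg(t)$ whenever $st\neq0$; $S_\alpha=\deg^{-1}(\alpha)\cup\{0\}$, $\varepsilon$ the identity of $\Gamma$, and $S_\alpha S_\beta=\{st:s\in S_\alpha,t\in S_\beta\}$. $S$ is strongly graded if $S_\alpha S_\beta=S_{\alpha\beta}$ for all $\alpha,\beta$. $E(S)$ is the set of idempotents. $S$ has local units if for each $s$ there are $u,v\in E(S)$ with $us=s=sv$; such idempotents are called local units. Green's relations: $s\,\mathscr L\,t$ iff $S^1s=S^1t$ and $s\,\mathscr R\,t$ iff $sS^1=tS^1$, where $S^1$ is $S$ with an identity adjoined. *)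

Record Group := {
  g_car :> Type;
  g_mul : g_car -> g_car -> g_car;
  g_one : g_car;
  g_inv : g_car -> g_car;
  g_mulA : forall a b c, g_mul a (g_mul b c) = g_mul (g_mul a b) c;
  g_mul1l : forall a, g_mul g_one a = a;
  g_mul1r : forall a, g_mul a g_one = a;
  g_mulVl : forall a, g_mul (g_inv a) a = g_one;
  g_mulVr : forall a, g_mul a (g_inv a) = g_one
}.

Record Semigroup0 := {
  s_car :> Type;
  s_mul : s_car -> s_car -> s_car;
  s_zero : s_car;
  s_mulA : forall a b c, s_mul a (s_mul b c) = s_mul (s_mul a b) c;
  s_mul0l : forall a, s_mul s_zero a = s_zero;
  s_mul0r : forall a, s_mul a s_zero = s_zero
}.

Section Defs.
Variable (G : Group) (S : Semigroup0).

Local Notation "x * y" := (s_mul S x y).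
Local Notation "0" := (s_zero S).

(* deg : S \ {0} -> G, represented as a total function whose value at 0
   is irrelevant; deg(st) = deg(s)deg(t) whenever st <> 0. *)
Definition is_grading (deg : S -> G) : Prop :=
  forall s t : S, s * t <> 0 -> deg (s * t) = g_mul G (deg s) (deg t).

Definition homog (deg : S -> G) (a : G) (s : S) : Prop :=
  s = 0 \/ (s <> 0 /\ deg s = a).

Definition setmul (A B : S -> Prop) (x : S) : Prop :=
  exists s t, A s /\ B t /\ x = s * t.

Definition set_eq (A B : S -> Prop) : Prop := forall x, A x <-> B x.

Definition strongly_graded (deg : S -> G) : Prop :=
  forall a b : G, set_eq (setmul (homog deg a) (homog deg b))
                         (homog deg (g_mul G a b)).

Definition idempotent (e : S) : Prop := e * e = e.

Definition has_local_units : Prop :=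
  forall s : S, exists u v, idempotent u /\ idempotent v /\ u * s = s /\ s * v = s.

Definition local_unit (u : S) : Prop :=
  idempotent u /\ exists s : S, u * s = s \/ s * u = s.

(* inv is the inverse operation of an inverse semigroup: every s has a
   unique t with sts = s and tst = t, namely t = inv s. *)
Definition inverse_semigroup_inv (inv : S -> S) : Prop :=
  forall s : S, (s * inv s * s = s /\ inv s * s * inv s = inv s) /\
    forall t : S, s * t * s = s -> t * s * t = t -> t = inv s.

Definition S1_left (s : S) (x : S) : Prop := x = s \/ exists y, x = y * s.
Definition S1_right (s : S) (x : S) : Prop := x = s \/ exists y, x = s * y.

Definition greenL (s t : S) : Prop := set_eq (S1_left s) (S1_left t).
Definition greenR (s t : S) : Prop := set_eq (S1_right s) (S1_right t).

End Defs.
Arguments is_grading {G S}.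
Arguments homog {G S}.
Arguments setmul {S}.
Arguments set_eq {S}.
Arguments strongly_graded {G S}.
Arguments idempotent {S}.
Arguments local_unit {S}.
Arguments inverse_semigroup_inv {S}.
Arguments greenL {S}.
Arguments greenR {S}.

From Stdlib Require Import Classical.

Set Implicit Arguments.

(* For a grading, S_a S_b is always contained in S_ab.  Conversely, if every
   local unit u factors as u = s t with s in S_a and t in S_a^-1, then any
   x in S_ab with u x = x is x = s (t x) with t x in S_b.  In an inverse
   semigroup an idempotent e = s t of this shape is r r^-1 for r = s t s = e s
   in S_a, because t s t is the inverse of s t s; and r^-1 r is L-related,
   r r^-1 R-related, to r.  Conversely u L s forces u = (u s^-1) s, and
   u R s forces u = s (s^-1 u). *)

Section GroupFacts.
Variable G : Group.
Local Notation gm := (g_mul G).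
Local Notation gi := (g_inv G).

Lemma g_mulIl (a x y : G) : gm a x = gm a y -> x = y.
Proof.
  intro H. rewrite <- (g_mul1l G x), <- (g_mul1l G y), <- (g_mulVl G a),
    <- !g_mulA, H. reflexivity.
Qed.

Lemma g_mulIr (a x y : G) : gm x a = gm y a -> x = y.
Proof.
  intro H. rewrite <- (g_mul1r G x), <- (g_mul1r G y), <- (g_mulVr G a),
    !g_mulA, H. reflexivity.
Qed.

Lemma g_idem_one (x : G) : gm x x = x -> x = g_one G.
Proof. intro H. apply (g_mulIl x). rewrite g_mul1r. exact H. Qed.

Lemma g_invK (a : G) : gi (gi a) = a.
Proof. apply (g_mulIl (gi a)). rewrite g_mulVr, g_mulVl. reflexivity. Qed.

Lemma g_inv_of_mul_mul (a b : G) : gm (gm a b) a = a -> b = gi a.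
Proof.
  intro H. apply (g_mulIl a). rewrite g_mulVr. apply (g_mulIr a).
  rewrite H, g_mul1l. reflexivity.
Qed.

End GroupFacts.

Arguments g_invK {G} a.

Section Graded.
Variables (G : Group) (S : Semigroup0) (deg : S -> G).
Hypothesis Hdeg : is_grading deg.
Local Notation "x * y" := (s_mul S x y).
Local Notation "0" := (s_zero S).
Local Notation gm := (g_mul G).
Local Notation gi := (g_inv G).

Lemma mul_neq0_l {s t : S} : s * t <> 0 -> s <> 0.
Proof. intros H E. apply H. rewrite E. apply s_mul0l. Qed.

Lemma mul_neq0_r {s t : S} : s * t <> 0 -> t <> 0.
Proof. intros H E. apply H. rewrite E. apply s_mul0r. Qed.

Lemma homog_mul a b s t :
  homog deg a s -> homog deg b t -> homog deg (gm a b) (s * t).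
Proof.
  intros Hs Ht. destruct (classic (s * t = 0)) as [E|E]; [now left|].
  right; split; [exact E|]. rewrite Hdeg by exact E.
  destruct Hs as [Hs|[_ ->]]; [contradiction (mul_neq0_l E Hs)|].
  destruct Ht as [Ht|[_ ->]]; [contradiction (mul_neq0_r E Ht)|].
  reflexivity.
Qed.

Lemma homog_idempotent e : idempotent e -> homog deg (g_one G) e.
Proof.
  intro He. destruct (classic (e = 0)) as [E|E]; [now left|].
  right; split; [exact E|]. apply g_idem_one.
  rewrite <- Hdeg; rewrite He; [reflexivity|exact E].
Qed.

Definition local_units_factor : Prop :=
  forall (a : G) (u : S), local_unit u ->
    setmul (homog deg a) (homog deg (gi a)) u.

Lemma strongly_graded_homog_inv_prod a :
  strongly_graded deg ->
  set_eq (setmul (homog deg a) (homog deg (gi a))) (homog deg (g_one G)).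
Proof. intro H. rewrite <- (g_mulVr G a). apply H. Qed.

Lemma local_units_factor_of_homog_inv_prod :
  (forall a, set_eq (setmul (homog deg a) (homog deg (gi a)))
                    (homog deg (g_one G))) ->
  local_units_factor.
Proof. intros H a u [Hu _]. apply H, homog_idempotent, Hu. Qed.

Lemma strongly_graded_local_units_factor :
  strongly_graded deg -> local_units_factor.
Proof.
  intro H. apply local_units_factor_of_homog_inv_prod.
  intro a. apply strongly_graded_homog_inv_prod, H.
Qed.

Lemma strongly_graded_of_local_units_factor :
  has_local_units S -> local_units_factor -> strongly_graded deg.
Proof.
  intros Hlu H a b x; split.
  - intros (s & t & Hs & Ht & ->). apply homog_mul; assumption.
  - intro Hx. destruct (classic (x = 0)) as [->|Ex].
    { exists 0, 0. repeat split; try now left. now rewrite s_mul0l. }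
    destruct (Hlu x) as (u & _ & Hu & _ & Hux & _).
    destruct (H a u (conj Hu (ex_intro _ x (or_introl Hux))))
      as (s & t & Hs & Ht & Eu).
    exists s, (t * x). split; [exact Hs|split].
    + rewrite <- (g_mul1l G b), <- (g_mulVl G a), <- g_mulA.
      apply homog_mul; assumption.
    + rewrite s_mulA, <- Eu, Hux. reflexivity.
Qed.

End Graded.

Arguments local_units_factor {G S} deg.

Arguments mul_neq0_l {S s t}.
Arguments mul_neq0_r {S s t}.

Section InverseSemigroup.
Variables (S : Semigroup0) (inv : S -> S).
Hypothesis Hinv : inverse_semigroup_inv inv.
Local Notation "x * y" := (s_mul S x y).
Local Notation "0" := (s_zero S).

Lemma mul_inv_mul s : s * inv s * s = s.
Proof. exact (proj1 (proj1 (Hinv s))). Qed.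

Lemma inv_mul_inv s : inv s * s * inv s = inv s.
Proof. exact (proj2 (proj1 (Hinv s))). Qed.

Lemma inv_unique s t : s * t * s = s -> t * s * t = t -> t = inv s.
Proof. exact (proj2 (Hinv s) t). Qed.

Lemma inv_zero : inv 0 = 0.
Proof. symmetry. apply inv_unique; rewrite !s_mul0l; reflexivity. Qed.

Lemma idempotent_mul_inv s : idempotent (s * inv s).
Proof. unfold idempotent. rewrite s_mulA, mul_inv_mul. reflexivity. Qed.

Lemma idempotent_inv_mul s : idempotent (inv s * s).
Proof. unfold idempotent. rewrite s_mulA, inv_mul_inv. reflexivity. Qed.

Section IdempotentProduct.
Variables s t : S.
Hypothesis Hst : idempotent (s * t).

Let absorb x : x * s * t * s * t = x * s * t.
Proof. rewrite <- !s_mulA, (s_mulA S s t), Hst, !s_mulA. reflexivity. Qed.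

Let absorb0 : s * t * s * t = s * t.
Proof. unfold idempotent in Hst. rewrite s_mulA in Hst. exact Hst. Qed.

Ltac normalize := repeat rewrite s_mulA; repeat (rewrite absorb0 || rewrite absorb).

Lemma inv_idempotent_prod_l : inv (s * t * s) = t * s * t.
Proof. symmetry. apply inv_unique; normalize; reflexivity. Qed.

Lemma inv_idempotent_prod_r : inv (t * s * t) = s * t * s.
Proof. symmetry. apply inv_unique; normalize; reflexivity. Qed.

Lemma idempotent_prod_eq_mul_inv : s * t = s * t * s * inv (s * t * s).
Proof. rewrite inv_idempotent_prod_l. normalize. reflexivity. Qed.

Lemma idempotent_prod_eq_inv_mul : s * t = inv (t * s * t) * (t * s * t).
Proof. rewrite inv_idempotent_prod_r. normalize. reflexivity. Qed.

End IdempotentProduct.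

Lemma S1_left_mul_inv_mul s u : S1_left S s u -> u * inv s * s = u.
Proof.
  intros [->|[y ->]]; [apply mul_inv_mul|].
  rewrite <- !s_mulA, (s_mulA S s), mul_inv_mul. reflexivity.
Qed.

Lemma S1_right_mul_inv_mul s u : S1_right S s u -> s * (inv s * u) = u.
Proof.
  intros [->|[y ->]]; rewrite !s_mulA, mul_inv_mul; reflexivity.
Qed.

Lemma greenL_inv_mul r : greenL (inv r * r) r.
Proof.
  intro x; split; intros [->|[y ->]]; right.
  - exists (inv r). reflexivity.
  - exists (y * inv r). rewrite s_mulA. reflexivity.
  - exists r. rewrite s_mulA, mul_inv_mul. reflexivity.
  - exists (y * r). rewrite <- (s_mulA S y), (s_mulA S r), mul_inv_mul. reflexivity.
Qed.

Lemma greenR_mul_inv r : greenR (r * inv r) r.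
Proof.
  intro x; split; intros [->|[y ->]]; right.
  - exists (inv r). reflexivity.
  - exists (inv r * y). rewrite s_mulA. reflexivity.
  - exists r. rewrite mul_inv_mul. reflexivity.
  - exists (r * y). rewrite s_mulA, mul_inv_mul. reflexivity.
Qed.

End InverseSemigroup.

Section GradedInverse.
Variables (G : Group) (S : Semigroup0) (deg : S -> G) (inv : S -> S).
Hypotheses (Hdeg : is_grading deg) (Hinv : inverse_semigroup_inv inv).
Local Notation "x * y" := (s_mul S x y).
Local Notation gm := (g_mul G).
Local Notation gi := (g_inv G).

Lemma homog_inv a s : homog deg a s -> homog deg (gi a) (inv s).
Proof.
  intros [->|[Hs Hd]]; [left; apply (inv_zero Hinv)|].
  assert (H1 : s * inv s * s <> s_zero S) by now rewrite (mul_inv_mul Hinv).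
  assert (H2 : s * inv s <> s_zero S) by exact (mul_neq0_l H1).
  right; split; [exact (mul_neq0_r H2)|].
  rewrite <- Hd. apply g_inv_of_mul_mul.
  rewrite <- Hdeg by exact H2. rewrite <- Hdeg by exact H1.
  rewrite (mul_inv_mul Hinv). reflexivity.
Qed.

Lemma strongly_graded_idempotent_mul_inv a e :
  strongly_graded deg -> idempotent e ->
  exists s, homog deg a s /\ e = s * inv s.
Proof.
  intros H He.
  destruct (strongly_graded_local_units_factor Hdeg H a
              (conj He (ex_intro _ e (or_introl He)))) as (s & t & Hs & _ & ->).
  exists (s * t * s). split.
  - rewrite <- (g_mul1l G a). apply homog_mul;
      [exact Hdeg | apply (homog_idempotent Hdeg), He | exact Hs].
  - apply (idempotent_prod_eq_mul_inv Hinv), He.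
Qed.

Lemma strongly_graded_idempotent_inv_mul a e :
  strongly_graded deg -> idempotent e ->
  exists s, homog deg a s /\ e = inv s * s.
Proof.
  intros H He.
  destruct (strongly_graded_local_units_factor Hdeg H (gi a)
              (conj He (ex_intro _ e (or_introl He)))) as (s & t & _ & Ht & ->).
  rewrite g_invK in Ht.
  exists (t * s * t). split.
  - rewrite <- s_mulA, <- (g_mul1r G a). apply homog_mul;
      [exact Hdeg | exact Ht | apply (homog_idempotent Hdeg), He].
  - apply (idempotent_prod_eq_inv_mul Hinv), He.
Qed.

Lemma local_units_factor_of_mul_inv :
  (forall a e, idempotent e -> exists s, homog deg a s /\ e = s * inv s) ->
  local_units_factor deg.
Proof.
  intros H a u [Hu _]. destruct (H a u Hu) as (s & Hs & ->).
  exists s, (inv s). repeat split; [exact Hs | apply homog_inv, Hs].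
Qed.

Lemma local_units_factor_of_inv_mul :
  (forall a e, idempotent e -> exists s, homog deg a s /\ e = inv s * s) ->
  local_units_factor deg.
Proof.
  intros H a u [Hu _]. destruct (H (gi a) u Hu) as (s & Hs & ->).
  exists (inv s), s. repeat split; [|exact Hs].
  rewrite <- (g_invK a). apply homog_inv, Hs.
Qed.

Lemma local_units_factor_of_greenL :
  (forall u a, idempotent u -> exists s, homog deg a s /\ greenL u s) ->
  local_units_factor deg.
Proof.
  intros H a u [Hu _]. destruct (H u (gi a) Hu) as (s & Hs & HL).
  exists (u * inv s), s. split; [|split; [exact Hs|]].
  - rewrite <- (g_invK a), <- (g_mul1l G (gi (gi a))).
    apply homog_mul; [exact Hdeg | apply (homog_idempotent Hdeg), Hu |].
    apply homog_inv, Hs.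
  - symmetry. apply (S1_left_mul_inv_mul Hinv), HL. now left.
Qed.

Lemma local_units_factor_of_greenR :
  (forall u a, idempotent u -> exists s, homog deg a s /\ greenR u s) ->
  local_units_factor deg.
Proof.
  intros H a u [Hu _]. destruct (H u a Hu) as (s & Hs & HR).
  exists s, (inv s * u). split; [exact Hs|split].
  - rewrite <- (g_mul1r G (gi a)).
    apply homog_mul; [exact Hdeg | apply homog_inv, Hs |].
    apply (homog_idempotent Hdeg), Hu.
  - symmetry. apply (S1_right_mul_inv_mul Hinv), HR. now left.
Qed.

End GradedInverse.

Theorem proposition2p12 (G : Group) (S : Semigroup0) (deg : S -> G)
  (Hdeg : is_grading deg) (Hlu : has_local_units S) :
  let P1 := strongly_graded deg in
  let P2 := forall a : G,
      set_eq (setmul (homog deg a) (homog deg (g_inv G a))) (homog deg (g_one G)) in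
  let P3 := forall a : G, forall u : S,
      local_unit u -> setmul (homog deg a) (homog deg (g_inv G a)) u in
  (P1 <-> P2) /\ (P1 <-> P3) /\
  (forall inv : S -> S, inverse_semigroup_inv inv ->
     (P1 <-> (forall a : G, forall e : S,
                idempotent e <-> exists s, homog deg a s /\ e = s_mul S s (inv s))) /\
     (P1 <-> (forall a : G, forall e : S,
                idempotent e <-> exists s, homog deg a s /\ e = s_mul S (inv s) s)) /\
     (P1 <-> (forall (u : S) (a : G), idempotent u ->
                exists s, homog deg a s /\ greenL u s)) /\
     (P1 <-> (forall (u : S) (a : G), idempotent u ->
                exists s, homog deg a s /\ greenR u s))).
Proof.
  intros P1 P2 P3.
  assert (H31 : P3 -> P1) by exact (strongly_graded_of_local_units_factor Hdeg Hlu).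
  split; [split|split; [split|]].
  - intros H a. apply strongly_graded_homog_inv_prod, H.
  - intro H. apply H31, (local_units_factor_of_homog_inv_prod Hdeg), H.
  - exact (strongly_graded_local_units_factor Hdeg).
  - exact H31.
  - intros inv Hinv. split; [split|split; [split|split; split]].
    + intros H a e; split; [apply strongly_graded_idempotent_mul_inv; assumption|].
      intros (s & _ & ->). apply idempotent_mul_inv, Hinv.
    + intro H. apply H31, (local_units_factor_of_mul_inv Hdeg Hinv), H.
    + intros H a e; split; [apply strongly_graded_idempotent_inv_mul; assumption|].
      intros (s & _ & ->). apply idempotent_inv_mul, Hinv.
    + intro H. apply H31, (local_units_factor_of_inv_mul Hdeg Hinv), H.
    + intros H u a Hu.
      destruct (strongly_graded_idempotent_inv_mul Hdeg Hinv a H Hu) as (r & Hr & ->).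
      exists r. split; [exact Hr | apply greenL_inv_mul, Hinv].
    + intro H. apply H31, (local_units_factor_of_greenL Hdeg Hinv), H.
    + intros H u a Hu.
      destruct (strongly_graded_idempotent_mul_inv Hdeg Hinv a H Hu) as (r & Hr & ->).
      exists r. split; [exact Hr | apply greenR_mul_inv, Hinv].
    + intro H. apply H31, (local_units_factor_of_greenR Hdeg Hinv), H.
Qed.
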